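(* Let $\mathcal R$ be a species of tree on $T_0=\{1,\dots,n\}$. (i) The $\mathbf Q$-vector space with basis $\{A(T):T\in\mathcal R\}$ is a commutative $\mathbf Q$-algebra consisting of symmetric, diagonalizable magic matrices of sum zero. (ii) The $\mathbf Q$-vector space with basis $\{I\}\cup\{A(T):T\in\mathcal R\}$ is a commutative $\mathbf Q$-algebra of symmetric, diagonalizable magic matrices. (In particular these families are linearly independent.)
   Context: A species of tree is a family $\mathcal R$ of subsets of $T_0$ containing $T_0$, each of cardinality $\ge 2$, any two of which are either disjoint or nested. For $T\subset T_0$ of cardinality $n(T)\ge2$, $A(T)=(\alpha_{i,j})$ is the $n\times n$ matrix with $\alpha_{i,j}=-1$ if $i\ne j$ and $\{i,j\}\subset T$, $\alpha_{i,i}=n(T)-1$ if $i\in T$, and $0$ otherwise. A matrix is magic if all its row and column sums are equal (its sum). $I$ is the identity. *)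

From mathcomp Require Import all_boot all_order all_algebra.
Set Implicit Arguments. Unset Strict Implicit. Unset Printing Implicit Defensive.
Import GRing.Theory.
Local Open Scope ring_scope.

(* A species of tree on T0 = 'I_n (i.e. {1,...,n} re-indexed from 0):
   contains T0, every member has cardinality >= 2, any two members are
   disjoint or nested. *)
Definition species_of_tree (n : nat) (R : {set {set 'I_n}}) : Prop :=
  [/\ [set: 'I_n] \in R,
      (forall T, T \in R -> 2 <= #|T|)%N &
      (forall T U, T \in R -> U \in R ->
         [disjoint T & U] \/ T \subset U \/ U \subset T)].

Definition Amx (n : nat) (T : {set 'I_n}) : 'M[rat]_n :=
  \matrix_(i < n, j < n)
    if (i \in T) && (j \in T) then
      (if i == j then (#|T|%:R - 1) else -1)
    else 0.

Definition magic_sum (n : nat) (M : 'M[rat]_n) (s : rat) : Prop :=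
  (forall i, \sum_(j < n) M i j = s) /\ (forall j, \sum_(i < n) M i j = s).

Definition magic (n : nat) (M : 'M[rat]_n) : Prop := exists s, magic_sum M s.

Definition comm_sym_diag_algebra (n : nat) (S : seq 'M[rat]_n) : Prop :=
  [/\ (forall M N, M \in <<S>>%VS -> N \in <<S>>%VS -> M *m N \in <<S>>%VS),
      (forall M N, M \in <<S>>%VS -> N \in <<S>>%VS -> M *m N = N *m M),
      (forall M, M \in <<S>>%VS -> M^T = M) &
      (forall M, M \in <<S>>%VS -> diagonalizable M)].

From mathcomp Require Import all_boot all_order all_algebra.
Set Implicit Arguments. Unset Strict Implicit. Unset Printing Implicit Defensive.
Import GRing.Theory Num.Theory.
Local Open Scope ring_scope.

(* Writing A(T) = |T| D_T - e_T e_T^T with e_T the indicator vector of T and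
   D_T = diag(e_T), one gets A(T) A(U) = |U| A(T) for T included in U and
   A(T) A(U) = 0 for disjoint T, U.  Hence for a laminar family the span of the
   A(T) (and of I together with them) is closed under products; since it
   consists of symmetric matrices, products commute ((MN)^T = NM), and commuting
   diagonalizable generators (A(T)^2 = |T| A(T)) are simultaneously
   diagonalizable.  Every A(T) kills the all-ones vector, which gives the magic
   property.  For independence, take T of minimal size with a nonzero
   coefficient: comparing the off-diagonal entries at a pair inside T and at a
   pair leaving T through the next larger set isolates that coefficient. *)

Section TreeMatrices.
Variable n : nat.
Implicit Types T U : {set 'I_n}.

Definition ind T : 'cV[rat]_n := \col_i (i \in T)%:R.
Definition diag_ind T : 'M[rat]_n := diag_mx (ind T)^T.

Lemma AmxE T : Amx T = #|T|%:R *: diag_ind T - ind T *m (ind T)^T.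
Proof.
apply/matrixP => i j; rewrite !mxE big_ord1 !mxE.
case: (eqVneq i j) => [<-|ij]; first by case: (i \in T); rewrite /= ?mulr1 ?mulr0.
by rewrite mulr0n mulr0 sub0r; case: (i \in T); case: (j \in T); rewrite /= ?mulr1 ?mul0r ?oppr0.
Qed.

Lemma mul_diag_ind T U : diag_ind T *m diag_ind U = diag_ind (T :&: U).
Proof.
rewrite mulmx_diag; congr diag_mx; apply/rowP => i; rewrite !mxE inE.
by case: (i \in T); case: (i \in U); rewrite ?mulr1 ?mul0r.
Qed.

Lemma mul_diag_ind_ind T U : diag_ind T *m ind U = ind (T :&: U).
Proof.
rewrite mul_diag_mx; apply/matrixP => i j; rewrite !mxE inE.
by case: (i \in T); case: (i \in U); rewrite ?mulr1 ?mul0r.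
Qed.

Lemma mul_tr_ind_diag_ind T U : (ind T)^T *m diag_ind U = (ind (T :&: U))^T.
Proof. by rewrite -[diag_ind U]tr_diag_mx -trmx_mul mul_diag_ind_ind setIC. Qed.

Lemma mul_tr_ind_ind T U : (ind T)^T *m ind U = (#|T :&: U|%:R)%:M.
Proof.
apply/matrixP => i j; rewrite !ord1 !mxE mulr1n -sum1_card natr_sum [RHS]big_mkcond /=.
by apply: eq_bigr => k _; rewrite !mxE inE; case: (k \in T); case: (k \in U); rewrite ?mulr1 ?mul0r.
Qed.

Lemma mulAmx T U : Amx T *m Amx U =
  (#|T|%:R * #|U|%:R) *: diag_ind (T :&: U) - #|T|%:R *: (ind (T :&: U) *m (ind U)^T)
  - #|U|%:R *: (ind T *m (ind (T :&: U))^T) + #|T :&: U|%:R *: (ind T *m (ind U)^T).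
Proof.
rewrite !AmxE mulmxBl !mulmxBr -!scalemxAl -!scalemxAr !scalerA mul_diag_ind.
rewrite !mulmxA mul_diag_ind_ind -!(mulmxA (ind T)) mul_tr_ind_diag_ind mul_tr_ind_ind.
by rewrite mul_scalar_mx -scalemxAr opprB addrA addrAC.
Qed.

Lemma mulAmx_sub T U : T \subset U -> Amx T *m Amx U = #|U|%:R *: Amx T.
Proof.
move=> /setIidPl TU; rewrite mulAmx TU AmxE scalerBr scalerA [_ * _]mulrC.
by rewrite addrAC subrK.
Qed.

Lemma mulAmx_disjoint T U : [disjoint T & U] -> Amx T *m Amx U = 0.
Proof.
rewrite -setI_eq0 => /eqP TU; rewrite mulAmx TU.
have ind0 : ind set0 = 0 by apply/matrixP => i j; rewrite !mxE inE.
have diag_ind0 : diag_ind set0 = 0 by apply/matrixP => i j; rewrite !mxE inE mul0rn.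
by rewrite ind0 diag_ind0 trmx0 mul0mx mulmx0 !scaler0 cards0 scale0r !subr0 addr0.
Qed.

Lemma tr_Amx T : (Amx T)^T = Amx T.
Proof. by apply/matrixP => i j; rewrite !mxE andbC eq_sym. Qed.

Lemma mulAmx_sup T U : U \subset T -> Amx T *m Amx U = #|T|%:R *: Amx U.
Proof. by move=> UT; rewrite -[LHS]trmxK trmx_mul !tr_Amx mulAmx_sub // linearZ /= tr_Amx. Qed.

Lemma Amx_mul_const1 T : Amx T *m (const_mx 1 : 'cV_n) = 0.
Proof.
have -> : (const_mx 1 : 'cV_n) = ind setT by apply/matrixP => i j; rewrite !mxE inE.
rewrite AmxE mulmxBl -scalemxAl mul_diag_ind_ind -mulmxA mul_tr_ind_ind.
by rewrite mul_mx_scalar setIT subrr.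
Qed.

End TreeMatrices.

Lemma diagonalizable_mul_self_scale (F : fieldType) n (A : 'M[F]_n.+1) (c : F) :
  c != 0 -> A *m A = c *: A -> diagonalizable A.
Proof.
move=> c0 AA; apply/diagonalizableP; exists [:: 0; c]; first by rewrite /= inE andbT eq_sym.
apply: mxminpoly_min; rewrite !big_cons big_nil mulr1 rmorphM !rmorphB /=.
by rewrite horner_mx_X !horner_mx_C raddf0 subr0 mulrBr -!mulmxE AA mul_mx_scalar subrr.
Qed.

Lemma diagonalizable_Amx n (T : {set 'I_n.+1}) : T != set0 -> diagonalizable (Amx T).
Proof.
move=> T0; apply: (@diagonalizable_mul_self_scale _ _ _ #|T|%:R).
  by rewrite pnatr_eq0 cards_eq0.
exact: mulAmx_sub.
Qed.

Definition laminar_pair (X : finType) (A B : {set X}) :=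
  [disjoint A & B] \/ A \subset B \/ B \subset A.

Lemma laminar_pair_subset (X : finType) (A B : {set X}) a :
  laminar_pair A B -> a \in A -> a \in B -> (#|A| <= #|B|)%N -> A \subset B.
Proof.
case=> [AB aA aB|[//|BA aA aB AleB]]; first by rewrite (disjointFr AB aA) in aB.
by have /eqP -> : B == A by rewrite eqEcard BA.
Qed.

Lemma mulAmx_memv n (V : {vspace 'M[rat]_n}) (T U : {set 'I_n}) :
  laminar_pair T U -> Amx T \in V -> Amx U \in V -> Amx T *m Amx U \in V.
Proof.
case=> [TU|[TU|UT]] AT AU.
- by rewrite mulAmx_disjoint // mem0v.
- by rewrite mulAmx_sub // memvZ.
- by rewrite mulAmx_sup // memvZ.
Qed.

Lemma span_Amx_mul_closed n (s : seq {set 'I_n}) (S := [seq Amx T | T <- s]) :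
  {in s &, forall T U : {set _}, laminar_pair T U} -> {in S &, forall x y, x *m y \in <<S>>%VS}.
Proof.
move=> s_laminar _ _ /mapP[T Ts ->] /mapP[U Us ->].
by apply: mulAmx_memv; [exact: s_laminar | exact/memv_span/map_f | exact/memv_span/map_f].
Qed.

Section SpanClosure.
Variables (F : fieldType) (n : nat) (s : seq 'M[F]_n).

Lemma span_ind (P : 'M_n -> Prop) :
  P 0 -> (forall a M N, P M -> P N -> P (a *: M + N)) -> {in s, forall x, P x} ->
  forall M, M \in <<s>>%VS -> P M.
Proof.
move=> P0 PD Ps M /(@coord_span _ _ _ (in_tuple s)) ->.
apply: big_ind => // [M1 M2 P1 P2|i _]; first by rewrite -[M1]scale1r; apply: PD.
by rewrite -[_ *: _]addr0; apply: PD => //; apply/Ps/mem_nth.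
Qed.

Lemma span_mulmx_closed :
  {in s &, forall x y, x *m y \in <<s>>%VS} ->
  forall M N, M \in <<s>>%VS -> N \in <<s>>%VS -> M *m N \in <<s>>%VS.
Proof.
move=> sM M N + sN; apply: (@span_ind (fun M => M *m N \in <<s>>%VS)).
- by rewrite mul0mx mem0v.
- by move=> a M1 M2 ? ?; rewrite mulmxDl -scalemxAl memvD ?memvZ.
move=> x xs; move: N sN; apply: (@span_ind (fun N => x *m N \in <<s>>%VS)).
- by rewrite mulmx0 mem0v.
- by move=> a N1 N2 ? ?; rewrite mulmxDr -scalemxAr memvD ?memvZ.
by move=> y ys; apply: sM.
Qed.

Lemma span_sym : {in s, forall x, x^T = x} -> forall M, M \in <<s>>%VS -> M^T = M.
Proof.
move=> sT; apply: span_ind => // [|a M N MT NT]; first by rewrite trmx0.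
by rewrite linearD linearZ /= MT NT.
Qed.

Lemma span_diagonalizable :
  {in s &, forall x y, comm_mx x y} -> {in s, forall x, diagonalizable x} ->
  forall M, M \in <<s>>%VS -> diagonalizable M.
Proof.
move=> sC sD; have [P Pu /allP Pdiag] := (codiagonalizableP s).1 (conj sC sD).
move=> M sMM; exists P => //; move: M sMM.
apply: (@span_ind (fun M => is_diag_mx (conjmx P M))).
- by rewrite conjmx0 mx0_is_diag.
- move=> a M N /is_diag_mxP MP /is_diag_mxP NP; apply/is_diag_mxP => i j ij.
  have -> : conjmx P (a *: M + N) = a *: conjmx P M + conjmx P N.
    by rewrite /conjmx mulmxDr mulmxDl -scalemxAr -scalemxAl.
  by rewrite mxE [X in X + _]mxE MP // NP // mulr0 addr0.
by move=> x /Pdiag.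
Qed.

Lemma span_mulmx_eq0 p (v : 'M[F]_(n, p)) :
  {in s, forall x, x *m v = 0} -> forall M, M \in <<s>>%VS -> M *m v = 0.
Proof.
move=> sv; apply: span_ind => // [|a M N Mv Nv]; first by rewrite mul0mx.
by rewrite mulmxDl -scalemxAl Mv Nv scaler0 addr0.
Qed.

Lemma span_eigenvector p (v : 'M[F]_(n, p)) :
  {in s, forall x, exists c, x *m v = c *: v} ->
  forall M, M \in <<s>>%VS -> exists c, M *m v = c *: v.
Proof.
move=> sv; apply: span_ind => // [|a M N [c Mv] [d Nv]]; first by exists 0; rewrite mul0mx scale0r.
by exists (a * c + d); rewrite mulmxDl -scalemxAl Mv Nv scalerA scalerDl.
Qed.

End SpanClosure.

Lemma comm_sym_diag_algebra_span n (s : seq 'M[rat]_n) :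
  {in s &, forall x y, x *m y \in <<s>>%VS} -> {in s, forall x, x^T = x} ->
  {in s, forall x, diagonalizable x} -> comm_sym_diag_algebra s.
Proof.
move=> sM sT sD; have Mclosed := span_mulmx_closed sM; have Tsym := span_sym sT.
have comm M N : M \in <<s>>%VS -> N \in <<s>>%VS -> M *m N = N *m M.
  by move=> sMM sNN; rewrite -(Tsym _ (Mclosed _ _ sMM sNN)) trmx_mul (Tsym M) ?(Tsym N).
split=> //; apply: span_diagonalizable sD => x y xs ys.
by apply: comm; apply: memv_span.
Qed.

Lemma comm_sym_diag_algebra_cons1 n (s : seq 'M[rat]_n) :
  {in s &, forall x y, x *m y \in <<s>>%VS} -> {in s, forall x, x^T = x} ->
  {in s, forall x, diagonalizable x} -> comm_sym_diag_algebra (1%:M :: s).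
Proof.
move=> sM sT sD; have sub_s : (<<s>> <= <<1%:M :: s>>)%VS by rewrite span_cons addvSr.
apply: comm_sym_diag_algebra_span => [x y|x|x]; rewrite !inE.
- case/predU1P=> [->|xs]; first by rewrite mul1mx => ys; apply: memv_span.
  case/predU1P=> [->|ys]; first by rewrite mulmx1 memv_span ?inE ?xs ?orbT.
  exact: subvP sub_s _ (sM x y xs ys).
- by case/predU1P=> [->|/sT//]; rewrite trmx1.
- by case/predU1P=> [->|/sD//]; apply: diagonalizable_scalar.
Qed.

Lemma magic_sum_sym n (M : 'M[rat]_n) c :
  M^T = M -> M *m const_mx 1 = c *: (const_mx 1 : 'cV_n) -> magic_sum M c.
Proof.
move=> MT Mc; have row i : \sum_j M i j = c.
  have := congr1 (fun v : 'cV_n => v i ord0) Mc; rewrite !mxE mulr1 => <-.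
  by apply: eq_bigr => j _; rewrite mxE mulr1.
split=> // j; rewrite -(row j); apply: eq_bigr => i _.
by rewrite -[in LHS]MT mxE.
Qed.

Lemma span_magic_sum0 n (s : seq 'M[rat]_n) :
  {in s, forall x, x^T = x} -> {in s, forall x, x *m const_mx 1 = (0 : 'cV_n)} ->
  forall M, M \in <<s>>%VS -> magic_sum M 0.
Proof.
move=> sT s1 M sM; apply: magic_sum_sym; first exact: span_sym sT _ sM.
by rewrite (span_mulmx_eq0 s1 sM) scale0r.
Qed.

Lemma span_magic n (s : seq 'M[rat]_n) :
  {in s, forall x, x^T = x} ->
  {in s, forall x, exists c, x *m const_mx 1 = c *: (const_mx 1 : 'cV_n)} ->
  forall M, M \in <<s>>%VS -> magic M.
Proof.
move=> sT s1 M sM; have [c Mc] := span_eigenvector s1 sM.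
by exists c; apply: magic_sum_sym Mc; apply: span_sym sT _ sM.
Qed.

Lemma scalar1_notin_span n (s : seq 'M[rat]_n.+1) :
  {in s, forall x, x *m const_mx 1 = (0 : 'cV_n.+1)} -> 1%:M \notin <<s>>%VS.
Proof.
move=> s1; apply/negP=> /(span_mulmx_eq0 s1); rewrite mul1mx => /matrixP/(_ ord0 ord0).
by rewrite !mxE.
Qed.

Lemma eq_bigl_nonzero (I : finType) (V : nmodType) (P Q : pred I) (F : I -> V) :
  (forall i, F i != 0 -> P i = Q i) -> \sum_(i | P i) F i = \sum_(i | Q i) F i.
Proof.
move=> PQ; rewrite big_mkcond [RHS]big_mkcond; apply: eq_bigr => i _.
by have [->|/PQ->] := eqVneq (F i) 0; rewrite ?if_same.
Qed.

Section LaminarIndependence.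
Variables (n : nat) (I : finType) (T : I -> {set 'I_n}) (k : I -> rat).
Hypotheses (T_inj : injective T) (T_card : forall i, (2 <= #|T i|)%N).
Hypothesis T_laminar : forall i j, laminar_pair (T i) (T j).

Definition pair_weight x y := \sum_(i | (x \in T i) && (y \in T i)) k i.

Lemma sum_Amx_offdiag x y :
  x != y -> (\sum_i k i *: Amx (T i)) x y = - pair_weight x y.
Proof.
move=> xy; rewrite summxE /pair_weight -sumrN [RHS]big_mkcond; apply: eq_bigr => i _.
by rewrite !mxE (negbTE xy); case: (_ && _); rewrite ?mulrN1 ?mulr0 ?oppr0.
Qed.

Hypothesis pair_weight0 : forall x y, x != y -> pair_weight x y = 0.

Section MinimalSet.
Variable t : I.
Hypothesis t_min : forall j, k j != 0 -> (#|T t| <= #|T j|)%N.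

Lemma minimal_subset j a : k j != 0 -> a \in T t -> a \in T j -> T t \subset T j.
Proof. by move=> kj aT aj; apply: laminar_pair_subset (T_laminar t j) aT aj (t_min kj). Qed.

Lemma sum_supsets_eq0 : \sum_(j | T t \subset T j) k j = 0.
Proof.
have [a [b [aT bT ab]]] := card_gt1P (T_card t).
rewrite -[RHS](pair_weight0 ab) /pair_weight; apply: eq_bigl_nonzero => j kj.
apply/idP/andP => [tj|[aj _]]; last exact: minimal_subset aj.
by rewrite !(subsetP tj).
Qed.

Lemma sum_proper_supsets_eq0 : \sum_(j | T t \proper T j) k j = 0.
Proof.
have [a aT] : {a | a \in T t} by apply/sigW/card_gt0P; apply: leq_trans (T_card t).
have [u0 u0P | none] := pickP [pred j | (k j != 0) && (T t \proper T j)]; last first.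
  rewrite big1 // => j tj; apply/eqP; apply: contraT => kj.
  by have := none j; rewrite /= kj tj.
have [u /andP[ku tu] u_min] := arg_minnP (fun j => #|T j|) u0P.
have [_ [c cu ct]] := properP tu.
have ac : a != c by apply: contraNneq ct => <-.
(* the pair (a, c) lies in exactly the proper supersets of T t *)
rewrite -[RHS](pair_weight0 ac) /pair_weight; apply: eq_bigl_nonzero => j kj; apply/idP/andP.
- move=> tj; have aj : a \in T j := subsetP (proper_sub tj) a aT.
  have au : a \in T u := subsetP (proper_sub tu) a aT.
  have uj : T u \subset T j.
    by apply: laminar_pair_subset (T_laminar u j) au aj _; apply: u_min; apply/andP.
  by rewrite aj (subsetP uj).
move=> [aj cj]; apply/properP; split; first exact: minimal_subset aj.
by exists c.
Qed.

Lemma minimal_coef_eq0 : k t = 0.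
Proof.
have := sum_supsets_eq0; rewrite (bigD1 t) //=.
rewrite (eq_bigl (fun j => T t \proper T j)) ?sum_proper_supsets_eq0 ?addr0 // => j.
by rewrite properEneq andbC (inj_eq T_inj) eq_sym.
Qed.

End MinimalSet.

Lemma laminar_coef_eq0 i : k i = 0.
Proof.
apply/eqP; apply: contraT => ki.
have [t kt t_min] := @arg_minnP _ i (fun j => k j != 0) (fun j => #|T j|) ki.
by move: kt; rewrite minimal_coef_eq0 ?eqxx.
Qed.

End LaminarIndependence.

Lemma free_Amx n (s : seq {set 'I_n}) :
  uniq s -> {in s, forall T : {set _}, (2 <= #|T|)%N} ->
  {in s &, forall T U : {set _}, laminar_pair T U} ->
  free [seq Amx T | T <- s].
Proof.
set S := [seq Amx T | T <- s] => s_uniq s_card s_laminar.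
apply/(freeP (X := in_tuple S)) => k sum0.
have lt_s (j : 'I_(size S)) : (j < size s)%N by rewrite -(size_map (@Amx n)).
pose T (j : 'I_(size S)) := nth set0 s j.
have Ts j : T j \in s by apply: mem_nth (lt_s j).
apply: (@laminar_coef_eq0 _ _ T).
- by move=> j1 j2 /eqP; rewrite nth_uniq ?lt_s // => /eqP /val_inj.
- by move=> j; apply/s_card/Ts.
- by move=> j1 j2; apply: s_laminar; apply: Ts.
have sumA0 : \sum_j k j *: Amx (T j) = 0.
  by rewrite -[RHS]sum0; apply: eq_bigr => j _; rewrite /= (nth_map set0) ?lt_s.
by move=> x y xy; apply: oppr_inj; rewrite oppr0 -sum_Amx_offdiag // sumA0 mxE.
Qed.

Theorem mainTheorem7 (n : nat) (R : {set {set 'I_n}}) :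
  species_of_tree R ->
  let S := [seq Amx T | T <- enum R] in
  (free S /\ comm_sym_diag_algebra S /\
   (forall M, M \in <<S>>%VS -> magic_sum M 0)) /\
  (free (1%:M :: S) /\ comm_sym_diag_algebra (1%:M :: S) /\
   (forall M, M \in <<1%:M :: S>>%VS -> magic M)).
Proof.
case: n R => [|n] R [RT R_card R_laminar] S.
  by have := R_card _ RT; rewrite cardsT card_ord.
have S_Amx x : x \in S -> exists2 T, T \in R & x = Amx T.
  by case/mapP=> T; rewrite mem_enum; exists T.
have S_mul : {in S &, forall x y, x *m y \in <<S>>%VS}.
  by apply: span_Amx_mul_closed => T U; rewrite !mem_enum; apply: R_laminar.
have S_sym : {in S, forall x, x^T = x} by move=> x /S_Amx[T _ ->]; apply: tr_Amx.
have S_diag : {in S, forall x, diagonalizable x}.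
  by move=> x /S_Amx[T TR ->]; apply: diagonalizable_Amx; rewrite -card_gt0 (ltnW (R_card T TR)).
have S_ones : {in S, forall x, x *m (const_mx 1 : 'cV_n.+1) = 0}.
  by move=> x /S_Amx[T _ ->]; apply: Amx_mul_const1.
have freeS : free S.
  apply: free_Amx => [|T|T U]; rewrite ?enum_uniq ?mem_enum //; [exact: R_card | exact: R_laminar].
split; split.
- exact: freeS.
- by split; [exact: comm_sym_diag_algebra_span | exact: span_magic_sum0].
- by rewrite free_cons scalar1_notin_span.
split; first exact: comm_sym_diag_algebra_cons1.
apply: span_magic => x; rewrite inE => /predU1P[->|xS].
- exact: trmx1.
- exact: S_sym.
- by exists 1; rewrite mul1mx scale1r.
- by exists 0; rewrite scale0r S_ones.
Qed.
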